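(* In the time-dependent setting below, for $u^0\in l^{\infty,+}$ and $t_0\in\mathbb R$: if $u^0\le d\phi(t_0,\cdot)+d_1\phi_1(t_0,\cdot)$ (resp. $u^0\ge d\phi(t_0,\cdot)-d_1\phi_1(t_0,\cdot)$) with $0<d\le2$ and $d_1$ sufficiently large, then $u(t;t_0,u^0)\le d\phi(t,\cdot)+d_1\phi_1(t,\cdot)$ (resp. $u(t;t_0,u^0)\ge d\phi(t,\cdot)-d_1\phi_1(t,\cdot)$) for all $t\ge t_0$.
   Context: Time-dependent setting: the lattice equation $\dot u_j(t)=\big(u_{j+1}(t)-u_j(t)\big)+\big(u_{j-1}(t)-u_j(t)\big)+u_j(t)f(t,u_j(t))$, $j\in\mathbb Z$ (spatially homogeneous, unit diffusion, which is the normalization behind the formulas below), where $f$ satisfies (H0): locally Hölder in $t$, Lipschitz in $u$, $C^1$ in $u$ for $u\ge0$, $f(t,u)=f(t,0)$ for $u\le0$, $f(t,u)<0$ for $u\ge M_0$, $f_u<0$ for $u\ge0$, $\liminf_{t-s\to\infty}\frac1{t-s}\int_s^tf(\tau,0)d\tau>0$. $u(t;s,u^0)$ is the solution with $u(s;s,u^0)=u^0$; $l^{\infty,+}$ is the set of bounded nonnegative sequences; inequalities componentwise. Let $\bar f_{\inf}=\liminf_{t-s\to\infty}\frac1{t-s}\int_s^tf(\tau,0)d\tau$ and $\tilde c_0^-=\inf_{\mu>0}\frac{e^{-\mu}+e^\mu-2+\bar f_{\inf}}{\mu}$, attained at a unique $\mu^*>0$. Fix $\gamma>\tilde c_0^-$,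 let $0<\mu<\mu^*$ solve $\frac{e^{-\mu}+e^\mu-2+\bar f_{\inf}}{\mu}=\gamma$, and $c(t)=\frac{e^{-\mu}+e^\mu-2+f(t,0)}{\mu}$. Let $\phi(t,j)=e^{-\mu(j-\int_0^tc(\tau)d\tau)}$. Choose $\tilde\mu\in(\mu,2\mu)$ such that $B(t)=-(e^{-\tilde\mu}+e^{\tilde\mu}-2)+c(t)\tilde\mu-f(t,0)$ has $\liminf_{t-s\to\infty}\frac1{t-s}\int_s^tB>0$, and $A\in W^{1,\infty}(\mathbb R)$ with $\operatorname{ess\,inf}_{t}(A'(t)+B(t))>0$. Let $\phi_1(t,j)=e^{A(t)-\tilde\mu(j-\int_0^tc(\tau)d\tau)}$. *)

From Stdlib Require Import Reals Lra ZArith ClassicalEpsilon.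
Open Scope R_scope.

(* Riemann integral of g over [a,b] (signed, as RiemannInt); its value is
   independent of the integrability proof.  For non-integrable g the value is
   unspecified, but all functions used below are continuous. *)
Definition Rint (g : R -> R) (a b : R) : R :=
  epsilon (inhabits 0%R)
    (fun I => exists pr : Riemann_integrable g a b, RiemannInt pr = I).

Definition avg (g : R -> R) (s t : R) : R := Rint g s t / (t - s).

(* L = liminf_{t-s -> oo} (1/(t-s)) int_s^t g   (finite value) *)
Definition is_liminf_avg (g : R -> R) (L : R) : Prop :=
  forall eps, 0 < eps ->
    (exists T, 0 < T /\ forall s t, T <= t - s -> L - eps <= avg g s t) /\
    (forall T, exists s t, T <= t - s /\ avg g s t <= L + eps).

(* liminf_{t-s -> oo} (1/(t-s)) int_s^t g > 0  (value possibly +oo) *)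
Definition liminf_avg_pos (g : R -> R) : Prop :=
  exists delta T, 0 < delta /\ 0 < T /\
    forall s t, T <= t - s -> delta <= avg g s t.

Definition lattice_rhs (f : R -> R -> R) (t : R) (v : Z -> R) (j : Z) : R :=
  (v (j + 1)%Z - v j) + (v (j - 1)%Z - v j) + v j * f t (v j).

Definition linf_plus (v : Z -> R) : Prop :=
  (exists M, forall j, Rabs (v j) <= M) /\ (forall j, 0 <= v j).

Definition is_solution (f : R -> R -> R) (t0 : R) (u0 : Z -> R)
    (u : R -> Z -> R) : Prop :=
  (forall j, u t0 j = u0 j) /\
  (forall T, t0 <= T -> exists M, forall t j, t0 <= t <= T -> Rabs (u t j) <= M) /\
  (forall j t, t0 < t ->
      derivable_pt_lim (fun s => u s j) t (lattice_rhs f t (u t) j)) /\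
  (forall j eps, 0 < eps -> exists delta, 0 < delta /\
      forall t, t0 <= t < t0 + delta -> Rabs (u t j - u0 j) < eps).

Definition H0 (f fu : R -> R -> R) (M0 : R) : Prop :=
  (forall K, 0 < K -> exists alpha L, 0 < alpha <= 1 /\ 0 <= L /\
      forall t s u, Rabs t <= K -> Rabs s <= K -> Rabs u <= K ->
        Rabs (f t u - f s u) <= L * Rpower (Rabs (t - s)) alpha) /\
  (forall K, 0 < K -> exists L, 0 <= L /\
      forall t u v, Rabs u <= K -> Rabs v <= K ->
        Rabs (f t u - f t v) <= L * Rabs (u - v)) /\
  (forall t u, 0 < u -> derivable_pt_lim (f t) u (fu t u)) /\
  (forall t u, 0 <= u -> forall eps, 0 < eps -> exists delta, 0 < delta /\
      forall v, 0 <= v -> Rabs (v - u) < delta -> Rabs (fu t v - fu t u) < eps) /\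
  (forall t u, u <= 0 -> f t u = f t 0) /\
  (forall t u, M0 <= u -> f t u < 0) /\
  (forall t u, 0 <= u -> fu t u < 0) /\
  liminf_avg_pos (fun t => f t 0).

Definition speed (a mu : R) : R := (exp (- mu) + exp mu - 2 + a) / mu.

Definition cfun (f : R -> R -> R) (mu : R) (t : R) : R := speed (f t 0) mu.

Definition Bfun (f : R -> R -> R) (mu mut : R) (t : R) : R :=
  - (exp (- mut) + exp mut - 2) + cfun f mu t * mut - f t 0.

Definition phi (f : R -> R -> R) (mu : R) (t : R) (j : Z) : R :=
  exp (- mu * (IZR j - Rint (cfun f mu) 0 t)).

Definition phi1 (f : R -> R -> R) (mu mut : R) (A : R -> R) (t : R) (j : Z) : R :=
  exp (A t - mut * (IZR j - Rint (cfun f mu) 0 t)).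

(* A in W^{1,infty}(R) with ess inf (A' + B) > 0, expressed without measure
   theory: A bounded and Lipschitz, and A(t)-A(s)+int_s^t B >= delta (t-s). *)
Definition A_admissible (A B : R -> R) : Prop :=
  (exists M, forall t, Rabs (A t) <= M) /\
  (exists L, forall s t, Rabs (A t - A s) <= L * Rabs (t - s)) /\
  (exists delta, 0 < delta /\
     forall s t, s <= t -> delta * (t - s) <= A t - A s + Rint B s t).

(* Both bounds are comparison arguments for the lattice equation.  The speed [c] is chosen
   so that [phi] solves the linearization [v' = Delta v + f(t,0) v] exactly, and
   [x f(t,x) <= x f(t,0)]; hence [d phi + d1 phi1] is a supersolution as soon as [phi1] is a
   supersolution of the linearization, which is what [A' + B >= delta > 0] provides.  For
   [w = d phi - d1 phi1] to be a subsolution, the loss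
   [w (f(t,0) - f(t,w)) = O(w^2) = O(e^(-2 mu x))] must be absorbed by
   [d1 delta phi1 ~ e^(-mut x)], which works for [d1] large because [mut < 2 mu].  Since [A]
   is merely Lipschitz, [phi1] is replaced on each short time window by a smooth minorant
   whose exponent has slope [delta - B].  The comparison principle itself is a
   first-touching-point argument, made rigorous on the infinite lattice by a perturbation
   growing in time and in [|j|]. *)

From Stdlib Require Import Reals ZArith Lra Lia ClassicalEpsilon.
From Coquelicot Require Import Coquelicot.
Open Scope R_scope.

Lemma ex_RInt_continuity (g : R -> R) a b :
  (forall x, continuity_pt g x) -> ex_RInt g a b.
Proof.
  intros Hg. apply (ex_RInt_continuous (V := R_CompleteNormedModule)).
  intros z _. apply continuity_pt_filterlim, Hg.
Qed.

Lemma Rint_RInt (g : R -> R) a b :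
  (forall x, continuity_pt g x) -> Rint g a b = RInt g a b.
Proof.
  intros Hg. unfold Rint.
  destruct (epsilon_spec (inhabits 0)
    (fun I => exists pr : Riemann_integrable g a b, RiemannInt pr = I)) as [pr <-].
  - pose proof (ex_RInt_Reals_0 _ _ _ (ex_RInt_continuity g a b Hg)) as pr.
    now exists (RiemannInt pr), pr.
  - symmetry. apply RInt_Reals.
Qed.

Lemma derivable_pt_lim_Rint (g : R -> R) a t :
  (forall x, continuity_pt g x) -> derivable_pt_lim (fun x => Rint g a x) t (g t).
Proof.
  intros Hg. apply is_derive_Reals.
  apply (is_derive_ext (fun x => RInt g a x)).
  { intros x. symmetry. now apply Rint_RInt. }
  apply (is_derive_RInt (V := R_NormedModule) g (fun x => RInt g a x) a t).
  - apply filter_forall. intros x.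
    apply (RInt_correct (V := R_CompleteNormedModule)), ex_RInt_continuity, Hg.
  - apply continuity_pt_filterlim, Hg.
Qed.

Lemma Rint_point (g : R -> R) a : (forall x, continuity_pt g x) -> Rint g a a = 0.
Proof.
  intros Hg. rewrite Rint_RInt by exact Hg. apply (RInt_point (V := R_CompleteNormedModule)).
Qed.

Lemma Rint_le_const (g : R -> R) a b m :
  (forall x, continuity_pt g x) -> a <= b ->
  (forall x, a <= x <= b -> g x <= m) -> Rint g a b <= m * (b - a).
Proof.
  intros Hg Hab Hm. rewrite Rint_RInt by exact Hg.
  replace (m * (b - a)) with (RInt (fun _ => m) a b)
    by (rewrite RInt_const; unfold scal; simpl; unfold mult; simpl; ring).
  apply RInt_le; [exact Hab | now apply ex_RInt_continuity | apply ex_RInt_const |].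
  intros x Hx. apply Hm. lra.
Qed.

Lemma exp_le_compat x y : x <= y -> exp x <= exp y.
Proof. intros [Hlt | ->]; [left; now apply exp_increasing | right; reflexivity]. Qed.

Definition disc_lap (v : Z -> R) (j : Z) : R := v (j + 1)%Z + v (j - 1)%Z - 2 * v j.

Lemma lattice_rhs_disc_lap f t v j : lattice_rhs f t v j = disc_lap v j + v j * f t (v j).
Proof. unfold lattice_rhs, disc_lap. ring. Qed.

Definition lap_symbol (m : R) : R := exp (- m) + exp m - 2.

Lemma lap_symbol_nonneg m : 0 <= lap_symbol m.
Proof. unfold lap_symbol. pose proof (exp_ineq1_le m). pose proof (exp_ineq1_le (- m)). lra. Qed.

Lemma lap_symbol_opp m : lap_symbol (- m) = lap_symbol m.
Proof. unfold lap_symbol. rewrite Ropp_involutive. ring. Qed.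

Lemma disc_lap_exp (a m : R) j :
  disc_lap (fun i => exp (a - m * IZR i)) j = lap_symbol m * exp (a - m * IZR j).
Proof.
  unfold disc_lap, lap_symbol. rewrite plus_IZR, minus_IZR.
  replace (a - m * (IZR j + 1)) with ((a - m * IZR j) + - m) by ring.
  replace (a - m * (IZR j - 1)) with ((a - m * IZR j) + m) by ring.
  rewrite !exp_plus. ring.
Qed.

Definition cosh_weight (j : Z) : R := exp (IZR j) + exp (- IZR j).

Lemma cosh_weight_pos j : 0 < cosh_weight j.
Proof. unfold cosh_weight. pose proof (exp_pos (IZR j)). pose proof (exp_pos (- IZR j)). lra. Qed.

Lemma disc_lap_cosh_weight j : disc_lap cosh_weight j = lap_symbol 1 * cosh_weight j.
Proof.
  assert (Hw : forall i, cosh_weight i = exp (0 - (Ropp 1) * IZR i) + exp (0 - 1 * IZR i))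
    by (intros i; unfold cosh_weight; f_equal; f_equal; ring).
  pose proof (disc_lap_exp 0 (Ropp 1) j) as Hplus. pose proof (disc_lap_exp 0 1 j) as Hminus.
  rewrite lap_symbol_opp in Hplus. unfold disc_lap in *. rewrite !Hw. lra.
Qed.

Lemma cosh_weight_large K eps : 0 < eps ->
  exists N : nat, forall j, (Z.of_nat N < Z.abs j)%Z -> K < eps * cosh_weight j.
Proof.
  intros Heps. destruct (archimed (K / eps)) as [Hup _].
  exists (Z.to_nat (up (K / eps))). intros j Hj.
  assert (Hz : IZR (up (K / eps)) < Rabs (IZR j)).
  { rewrite <- abs_IZR. apply IZR_lt. destruct (Z_lt_le_dec (up (K / eps)) 0); lia. }
  assert (Hge : 1 + Rabs (IZR j) <= cosh_weight j).
  { unfold cosh_weight. pose proof (exp_ineq1_le (IZR j)). pose proof (exp_ineq1_le (- IZR j)).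
    pose proof (exp_pos (IZR j)). pose proof (exp_pos (- IZR j)).
    destruct (Rle_dec 0 (IZR j)); [rewrite Rabs_right | rewrite Rabs_left]; lra. }
  replace K with (eps * (K / eps)) by (field; lra).
  apply Rmult_lt_compat_l; lra.
Qed.

Fixpoint window_max (F : Z -> R) (n : nat) : R :=
  match n with
  | O => F 0%Z
  | S m => Rmax (window_max F m) (Rmax (F (Z.of_nat (S m))) (F (- Z.of_nat (S m))%Z))
  end.

Lemma window_max_ge F n j : (Z.abs j <= Z.of_nat n)%Z -> F j <= window_max F n.
Proof.
  induction n as [|n IH]; intros Hj; simpl.
  - replace j with 0%Z by lia. lra.
  - destruct (Z_le_dec (Z.abs j) (Z.of_nat n)).
    + eapply Rle_trans; [now apply IH | apply Rmax_l].
    + eapply Rle_trans; [| apply Rmax_r].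
      assert (j = Z.of_nat (S n) \/ j = (- Z.of_nat (S n))%Z) as [-> | ->] by lia.
      * apply Rmax_l.
      * apply Rmax_r.
Qed.

Lemma window_max_attained F n :
  exists j, (Z.abs j <= Z.of_nat n)%Z /\ window_max F n = F j.
Proof.
  induction n as [|n [j [Hj Hm]]]; simpl.
  - exists 0%Z. split; [lia | reflexivity].
  - unfold Rmax at 1. destruct (Rle_dec (window_max F n) _).
    + unfold Rmax. destruct (Rle_dec _ _).
      * exists (- Z.of_nat (S n))%Z. split; [lia | reflexivity].
      * exists (Z.of_nat (S n)). split; [lia | reflexivity].
    + exists j. split; [lia | exact Hm].
Qed.

Definition continuous_in (g : R -> R) (a b t : R) : Prop :=
  forall eps, 0 < eps -> exists del, 0 < del /\
    forall x, a <= x <= b -> Rabs (x - t) < del -> Rabs (g x - g t) < eps.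

Lemma continuity_pt_continuous_in (g : R -> R) a b t :
  continuity_pt g t -> continuous_in g a b t.
Proof.
  intros Hg eps Heps. destruct (Hg eps Heps) as [del [Hdel Hnear]].
  exists del. split; [exact Hdel |].
  intros x _ Hxt. destruct (Req_dec x t) as [-> | Hne].
  - rewrite Rminus_diag, Rabs_R0. exact Heps.
  - apply Hnear. split; [split; [exact I | auto] | exact Hxt].
Qed.

Lemma continuous_in_combine (op : R -> R -> R) (g h : R -> R) a b t :
  (forall p q r s, Rabs (op p q - op r s) <= Rabs (p - r) + Rabs (q - s)) ->
  continuous_in g a b t -> continuous_in h a b t ->
  continuous_in (fun x => op (g x) (h x)) a b t.
Proof.
  intros Hop Hg Hh eps Heps.
  destruct (Hg (eps / 2)) as [d1 [Hd1 H1]]; [lra |].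
  destruct (Hh (eps / 2)) as [d2 [Hd2 H2]]; [lra |].
  exists (Rmin d1 d2). split; [now apply Rmin_pos |].
  intros x Hx Hxt. pose proof (Rmin_l d1 d2). pose proof (Rmin_r d1 d2).
  eapply Rle_lt_trans; [apply Hop |].
  pose proof (H1 x Hx ltac:(lra)). pose proof (H2 x Hx ltac:(lra)). lra.
Qed.

Lemma continuous_in_minus (g h : R -> R) a b t :
  continuous_in g a b t -> continuous_in h a b t ->
  continuous_in (fun x => g x - h x) a b t.
Proof.
  apply (continuous_in_combine Rminus). intros p q r s.
  replace (p - q - (r - s)) with ((p - r) + - (q - s)) by ring.
  rewrite <- (Rabs_Ropp (q - s)). apply Rabs_triang.
Qed.

Lemma continuous_in_max (g h : R -> R) a b t :
  continuous_in g a b t -> continuous_in h a b t ->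
  continuous_in (fun x => Rmax (g x) (h x)) a b t.
Proof.
  apply (continuous_in_combine Rmax). intros p q r s.
  pose proof (Rabs_pos (p - r)). pose proof (Rabs_pos (q - s)).
  pose proof (Rle_abs (p - r)). pose proof (Rle_abs (q - s)).
  pose proof (Rabs_minus_sym p r). pose proof (Rabs_minus_sym q s).
  pose proof (Rle_abs (r - p)). pose proof (Rle_abs (s - q)).
  unfold Rmax. repeat destruct Rle_dec; apply Rabs_le; lra.
Qed.

Lemma continuous_in_window_max (F : R -> Z -> R) a b t n :
  (forall j, continuous_in (fun x => F x j) a b t) ->
  continuous_in (fun x => window_max (F x) n) a b t.
Proof.
  intros HF. induction n as [|n IH]; simpl; [apply HF |].
  apply continuous_in_max; [exact IH |]. apply continuous_in_max; apply HF.
Qed.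

Lemma continuous_in_neg_left (g : R -> R) a b t :
  continuous_in g a b t -> a < t <= b -> (forall x, a <= x < t -> g x < 0) -> g t <= 0.
Proof.
  intros Hg Ht Hneg. destruct (Rle_dec (g t) 0) as [| Hpos]; [assumption | exfalso].
  destruct (Hg (g t)) as [del [Hdel Hnear]]; [lra |].
  set (x := t - Rmin (del / 2) ((t - a) / 2)).
  pose proof (Rmin_l (del / 2) ((t - a) / 2)). pose proof (Rmin_r (del / 2) ((t - a) / 2)).
  assert (0 < Rmin (del / 2) ((t - a) / 2)) by (apply Rmin_pos; lra).
  assert (Hx : a <= x < t) by (unfold x; lra).
  specialize (Hneg x Hx).
  assert (Hclose : Rabs (g x - g t) < g t).
  { apply Hnear; [lra |]. rewrite Rabs_left; unfold x in *; lra. }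
  rewrite Rabs_left in Hclose; lra.
Qed.

Lemma first_zero (M : R -> R) a b t1 :
  (forall t, a <= t <= b -> continuous_in M a b t) -> a <= t1 <= b ->
  M a < 0 -> 0 < M t1 ->
  exists ts, a < ts <= t1 /\ M ts = 0 /\ forall x, a <= x < ts -> M x < 0.
Proof.
  intros HM Ht1 Ha Hpos.
  set (E := fun tau => a <= tau /\ forall x, a <= x <= tau -> M x < 0).
  assert (HE : E a) by (split; [lra | intros x Hx; replace x with a by lra; exact Ha]).
  assert (Hbelow : forall tau, E tau -> tau < t1).
  { intros tau [_ Htau]. destruct (Rlt_dec tau t1) as [| Hn]; [assumption |].
    specialize (Htau t1 ltac:(lra)). lra. }
  destruct (completeness E) as [ts [Hub Hlub]].
  { exists t1. intros tau Htau. left. now apply Hbelow. }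
  { now exists a. }
  assert (Hat : a <= ts) by (now apply Hub).
  assert (Htst1 : ts <= t1) by (apply Hlub; intros tau Htau; left; now apply Hbelow).
  assert (Hbefore : forall x, a <= x < ts -> M x < 0).
  { intros x Hx. destruct (Rlt_dec (M x) 0) as [| Hn]; [assumption | exfalso].
    assert (ts <= x); [| lra].
    apply Hlub. intros tau [_ Htau]. destruct (Rle_dec tau x) as [| Hn']; [assumption |].
    specialize (Htau x ltac:(lra)). lra. }
  assert (Hnonneg : 0 <= M ts).
  { destruct (Rle_dec 0 (M ts)) as [| Hn]; [assumption | exfalso].
    assert (Hts : ts < t1) by (destruct (Req_dec ts t1); [subst; lra | lra]).
    destruct (HM ts ltac:(lra) (- M ts)) as [del [Hdel Hnear]]; [lra |].
    set (tau := ts + Rmin (del / 2) ((t1 - ts) / 2)).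
    pose proof (Rmin_l (del / 2) ((t1 - ts) / 2)). pose proof (Rmin_r (del / 2) ((t1 - ts) / 2)).
    assert (0 < Rmin (del / 2) ((t1 - ts) / 2)) by (apply Rmin_pos; lra).
    assert (HEtau : E tau); [| specialize (Hub tau HEtau); unfold tau in Hub; lra].
    split; [unfold tau; lra |]. intros x Hx.
    destruct (Rlt_dec x ts); [apply Hbefore; lra |].
    assert (Hclose : Rabs (M x - M ts) < - M ts).
    { apply Hnear; unfold tau in Hx; [lra | rewrite Rabs_right; lra]. }
    apply Rabs_def2 in Hclose. lra. }
  assert (Hats : a < ts) by (destruct (Req_dec a ts); [subst; lra | lra]).
  exists ts. split; [lra | split; [| exact Hbefore]].
  pose proof (continuous_in_neg_left M a b ts (HM ts ltac:(lra)) ltac:(lra) Hbefore). lra.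
Qed.

Lemma lattice_first_touch (W : R -> Z -> R) a b (N : nat) t1 j1 :
  a <= t1 <= b ->
  (forall t j, a <= t <= b -> continuous_in (fun x => W x j) a b t) ->
  (forall j, W a j < 0) ->
  (forall t j, a <= t <= b -> (Z.of_nat N < Z.abs j)%Z -> W t j < 0) ->
  0 < W t1 j1 ->
  exists ts j, a < ts <= b /\ W ts j = 0 /\ (forall x, a <= x < ts -> W x j < 0) /\
    (forall i, W ts i <= 0).
Proof.
  intros Ht1 Hcont Hinit Hfar Hpos.
  set (M := fun t => window_max (W t) N).
  assert (Hnear : forall t j, (Z.abs j <= Z.of_nat N)%Z -> W t j <= M t)
    by (intros; now apply window_max_ge).
  assert (HMa : M a < 0).
  { destruct (window_max_attained (W a) N) as [j [_ Hj]]. unfold M. rewrite Hj. apply Hinit. }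
  assert (HMt1 : 0 < M t1).
  { destruct (Z_le_dec (Z.abs j1) (Z.of_nat N)).
    - eapply Rlt_le_trans; [exact Hpos | now apply Hnear].
    - pose proof (Hfar t1 j1 Ht1 ltac:(lia)). lra. }
  destruct (first_zero M a b t1) as [ts [Hts [HMts Hbefore]]]; try assumption.
  { intros t Ht. apply continuous_in_window_max. intros j. now apply Hcont. }
  destruct (window_max_attained (W ts) N) as [j [Hj HMj]].
  exists ts, j. split; [lra | split; [unfold M in HMts; lra | split]].
  - intros x Hx. eapply Rle_lt_trans; [now apply Hnear | now apply Hbefore].
  - intros i. destruct (Z_le_dec (Z.abs i) (Z.of_nat N)).
    + rewrite <- HMts. now apply Hnear.
    + left. apply Hfar; [lra | lia].
Qed.

Lemma continuity_pt_derivable_pt_lim (g : R -> R) x l :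
  derivable_pt_lim g x l -> continuity_pt g x.
Proof. intros Hg. apply derivable_continuous_pt. now exists l. Qed.

Lemma derivable_pt_lim_nonneg_at_left_max (g : R -> R) x l a :
  derivable_pt_lim g x l -> a < x -> (forall y, a <= y < x -> g y <= g x) -> 0 <= l.
Proof.
  intros Hd Hax Hmax. destruct (Rle_dec 0 l) as [| Hl]; [assumption | exfalso].
  destruct (Hd (- l / 2)) as [del Hdel]; [lra |].
  pose proof (cond_pos del).
  set (h := - Rmin (del / 2) ((x - a) / 2)).
  pose proof (Rmin_l (del / 2) ((x - a) / 2)). pose proof (Rmin_r (del / 2) ((x - a) / 2)).
  assert (0 < Rmin (del / 2) ((x - a) / 2)) by (apply Rmin_pos; lra).
  assert (Hh : h <> 0) by (unfold h; lra).
  assert (Habs : Rabs h < del) by (unfold h; rewrite Rabs_Ropp, Rabs_right; lra).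
  specialize (Hdel h Hh Habs).
  assert (Hq : 0 <= (g (x + h) - g x) / h).
  { replace ((g (x + h) - g x) / h) with ((g x - g (x + h)) / - h) by (field; exact Hh).
    apply Rmult_le_pos; [pose proof (Hmax (x + h)); unfold h in *; lra |].
    left. apply Rinv_0_lt_compat. unfold h; lra. }
  apply Rabs_def2 in Hdel. lra.
Qed.

Lemma derivable_pt_lim_exp_affine g a x :
  derivable_pt_lim (fun t => exp (g * (t - a))) x (g * exp (g * (x - a))).
Proof.
  apply is_derive_Reals. auto_derive; [exact I |].
  replace (x + - a) with (x - a) by ring. ring.
Qed.

Definition growing_barrier (g a t : R) (j : Z) : R := exp (g * (t - a)) * cosh_weight j.

Lemma growing_barrier_pos g a t j : 0 < growing_barrier g a t j.
Proof. apply Rmult_lt_0_compat; [apply exp_pos | apply cosh_weight_pos]. Qed.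

Lemma growing_barrier_derive g a t j :
  derivable_pt_lim (fun x => growing_barrier g a x j) t (g * growing_barrier g a t j).
Proof.
  unfold growing_barrier. rewrite <- Rmult_assoc.
  apply (derivable_pt_lim_scal_right (fun x => exp (g * (x - a)))).
  apply derivable_pt_lim_exp_affine.
Qed.

Lemma disc_lap_growing_barrier g a t j :
  disc_lap (growing_barrier g a t) j = lap_symbol 1 * growing_barrier g a t j.
Proof.
  pose proof (disc_lap_cosh_weight j) as Hw. unfold disc_lap, growing_barrier in *.
  replace (lap_symbol 1 * _) with (exp (g * (t - a)) * (lap_symbol 1 * cosh_weight j)) by ring.
  rewrite <- Hw. ring.
Qed.

Lemma cosh_weight_le_growing_barrier g a t j :
  0 <= g -> a <= t -> cosh_weight j <= growing_barrier g a t j.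
Proof.
  intros Hg Ht. unfold growing_barrier. pose proof (cosh_weight_pos j).
  assert (1 <= exp (g * (t - a))); [| nra].
  rewrite <- exp_0. apply exp_le_compat, Rmult_le_pos; lra.
Qed.

Lemma lattice_max_principle (z : R -> Z -> R) a b Lam K :
  0 <= Lam ->
  (forall j, z a j <= 0) ->
  (forall t j, a <= t <= b -> z t j <= K) ->
  (forall t j, a <= t <= b -> continuous_in (fun x => z x j) a b t) ->
  (forall t j, a < t <= b -> exists l, derivable_pt_lim (fun x => z x j) t l /\
      (0 < z t j -> l <= disc_lap (z t) j + Lam * z t j)) ->
  forall t j, a <= t <= b -> z t j <= 0.
Proof.
  intros HLam Hinit Hbnd Hcont Hdiff t1 j1 Ht1.
  destruct (Rle_dec (z t1 j1) 0) as [| Hpos]; [assumption | exfalso]. apply Rnot_le_lt in Hpos.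
  (* Perturb by a multiple of [growing_barrier g a]: its growth in [j] confines a first
     touching point to a finite window, and [g > lap_symbol 1 + Lam] makes its slope impossible. *)
  pose proof (lap_symbol_nonneg 1).
  set (g := lap_symbol 1 + Lam + 1).
  set (G := growing_barrier g a).
  pose proof (growing_barrier_pos g a t1 j1).
  set (eps := z t1 j1 / (2 * G t1 j1)).
  assert (Heps : 0 < eps) by (apply Rdiv_lt_0_compat; unfold G; lra).
  set (W := fun t j => z t j - eps * G t j).
  assert (HGD : forall t j, derivable_pt_lim (fun x => eps * G x j) t (eps * (g * G t j)))
    by (intros; apply (derivable_pt_lim_scal (fun x => G x j)), growing_barrier_derive).
  destruct (cosh_weight_large K eps Heps) as [N HN].
  destruct (lattice_first_touch W a b N t1 j1 Ht1) as [ts [j [Hts [HW0 [Hbefore Hall]]]]].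
  - intros t j Ht. apply continuous_in_minus; [now apply Hcont |].
    eapply continuity_pt_continuous_in, continuity_pt_derivable_pt_lim, HGD.
  - intros j. unfold W. pose proof (Hinit j). pose proof (growing_barrier_pos g a a j).
    unfold G. nra.
  - intros t j Ht Hj. unfold W. specialize (HN j Hj). pose proof (Hbnd t j Ht).
    pose proof (cosh_weight_le_growing_barrier g a t j ltac:(unfold g; lra) (proj1 Ht)).
    unfold G. nra.
  - unfold W, eps. field_simplify; unfold G; lra.
  - destruct (Hdiff ts j Hts) as [l [Hl Hineq]].
    assert (Hslope : 0 <= l - eps * (g * G ts j)).
    { apply (derivable_pt_lim_nonneg_at_left_max (fun x => W x j) ts _ a);
        [now apply derivable_pt_lim_minus | lra |].
      intros y Hy. rewrite HW0. left. now apply Hbefore. }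
    assert (Hz : forall i, z ts i = W ts i + eps * G ts i) by (intros; unfold W; ring).
    pose proof (growing_barrier_pos g a ts j) as HGpos. fold G in HGpos.
    specialize (Hineq ltac:(rewrite Hz; nra)).
    assert (Hlap : disc_lap (z ts) j <= eps * (lap_symbol 1 * G ts j)).
    { pose proof (disc_lap_growing_barrier g a ts j) as Hw. fold G in Hw.
      pose proof (Hall (j + 1)%Z). pose proof (Hall (j - 1)%Z).
      unfold disc_lap in *. rewrite !Hz, <- Hw, HW0. nra. }
    rewrite Hz, HW0 in Hineq. unfold g in Hslope. nra.
Qed.

Lemma Rpower_small L al eps : 0 <= L -> 0 < al -> 0 < eps ->
  exists eta, 0 < eta /\ forall y, 0 < y < eta -> L * Rpower y al < eps.
Proof.
  intros HL Hal Heps. exists (Rpower (eps / (L + 1)) (/ al)).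
  split; [apply exp_pos |]. intros y Hy.
  assert (Hle : Rpower y al <= eps / (L + 1)).
  { replace (eps / (L + 1)) with (Rpower (Rpower (eps / (L + 1)) (/ al)) al)
      by (rewrite Rpower_mult, Rinv_l, Rpower_1 by (try apply Rdiv_lt_0_compat; lra); reflexivity).
    apply Rle_Rpower_l; lra. }
  assert (L * Rpower y al <= L * (eps / (L + 1))) by (apply Rmult_le_compat_l; assumption).
  assert (L * (eps / (L + 1)) < eps); [| lra].
  apply Rmult_lt_reg_r with (L + 1); [lra |].
  replace (L * (eps / (L + 1)) * (L + 1)) with (L * eps) by (field; lra). nra.
Qed.

Lemma continuity_pt_affine (g : R -> R) p q t :
  continuity_pt g t -> continuity_pt (fun x => p * g x + q) t.
Proof.
  intros Hg. apply (continuity_pt_ext (plus_fct (mult_real_fct p g) (fct_cte q))).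
  { intros x. reflexivity. }
  apply continuity_pt_plus; [now apply continuity_pt_scal | apply continuity_pt_const].
  intros x y. reflexivity.
Qed.

Lemma continuous_ab_bound (g : R -> R) a b :
  a <= b -> (forall t, continuity_pt g t) ->
  exists F, 0 <= F /\ forall t, a <= t <= b -> Rabs (g t) <= F.
Proof.
  intros Hab Hg.
  destruct (continuity_ab_maj g a b Hab (fun t _ => Hg t)) as [tM [HtM _]].
  destruct (continuity_ab_min g a b Hab (fun t _ => Hg t)) as [tm [Htm _]].
  pose proof (Rabs_pos (g tM)). pose proof (Rabs_pos (g tm)).
  exists (Rabs (g tM) + Rabs (g tm)). split; [lra |].
  intros t Ht. specialize (HtM t Ht). specialize (Htm t Ht).
  pose proof (Rle_abs (g tM)). pose proof (Rle_abs (- g tm)). rewrite Rabs_Ropp in *.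
  apply Rabs_le. lra.
Qed.

Section Reaction.
Variables (f fu : R -> R -> R) (M0 : R).
Hypothesis Hf : H0 f fu M0.

Lemma f0_continuous t : continuity_pt (fun x => f x 0) t.
Proof.
  destruct Hf as [Hhol _].
  destruct (Hhol (Rabs t + 1)) as [al [L [[Hal _] [HL Hcont]]]]; [pose proof (Rabs_pos t); lra |].
  intros eps Heps. destruct (Rpower_small L al eps HL Hal Heps) as [eta [Heta Hsmall]].
  exists (Rmin eta 1). split; [apply Rmin_pos; lra |].
  intros x [[_ Hxt] Hx]. simpl in *. unfold R_dist in *.
  pose proof (Rmin_l eta 1). pose proof (Rmin_r eta 1).
  assert (0 < Rabs (x - t)) by (apply Rabs_pos_lt; lra).
  eapply Rle_lt_trans; [apply Hcont | apply Hsmall; lra].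
  - pose proof (Rabs_triang_inv x t). lra.
  - lra.
  - rewrite Rabs_R0. pose proof (Rabs_pos t). lra.
Qed.

Lemma cfun_continuous mu t : continuity_pt (cfun f mu) t.
Proof.
  apply (continuity_pt_ext (fun x => / mu * f x 0 + lap_symbol mu / mu)).
  { intros x. unfold cfun, speed, lap_symbol, Rdiv. ring. }
  apply continuity_pt_affine, f0_continuous.
Qed.

Lemma Bfun_continuous mu mut t : continuity_pt (Bfun f mu mut) t.
Proof.
  apply (continuity_pt_ext
    (fun x => (mut / mu - 1) * f x 0 + (lap_symbol mu / mu * mut - lap_symbol mut))).
  { intros x. unfold Bfun, cfun, speed, lap_symbol, Rdiv. ring. }
  apply continuity_pt_affine, f0_continuous.
Qed.

(* [f t] is decreasing on (0, oo) but only Lipschitz at 0, so it is compared with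
   [f t e] for a small e > 0 first. *)
Lemma f_le_f0 t x : 0 <= x -> f t x <= f t 0.
Proof.
  intros Hx. destruct Hf as [_ [Hlip [Hd [_ [_ [_ [Hneg _]]]]]]].
  destruct Hx as [Hx | <-]; [| lra].
  destruct (Hlip (x + 1)) as [L [HL HLi]]; [lra |].
  assert (Hnear : forall e, 0 < e < x -> f t x <= f t 0 + L * e).
  { intros e He.
    destruct (MVT_cor2 (f t) (fu t) e x) as [c [Hc1 Hc2]]; [lra | intros; apply Hd; lra |].
    pose proof (Hneg t c ltac:(lra)).
    assert (Hdrop : f t x - f t e <= 0) by (rewrite Hc1; nra).
    assert (Hl : Rabs (f t e - f t 0) <= L * Rabs (e - 0))
      by (apply HLi; rewrite ?Rabs_R0, ?Rabs_right; lra).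
    rewrite Rminus_0_r, (Rabs_right e) in Hl by lra. pose proof (Rle_abs (f t e - f t 0)). lra. }
  apply Rnot_lt_le. intros Hgt.
  pose proof (Rmin_l (x / 2) ((f t x - f t 0) / (2 * (L + 1)))).
  pose proof (Rmin_r (x / 2) ((f t x - f t 0) / (2 * (L + 1)))).
  set (e := Rmin (x / 2) ((f t x - f t 0) / (2 * (L + 1)))) in *.
  assert (He : 0 < e) by (apply Rmin_pos; apply Rdiv_lt_0_compat; lra).
  specialize (Hnear e ltac:(lra)).
  assert (L * e <= (f t x - f t 0) / 2); [| lra].
  apply Rle_trans with ((L + 1) * e); [nra |].
  apply Rmult_le_reg_l with (/ (L + 1)); [apply Rinv_0_lt_compat; lra |].
  rewrite <- Rmult_assoc, Rinv_l, Rmult_1_l by lra.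
  apply Rle_trans with ((f t x - f t 0) / (2 * (L + 1))); [assumption |].
  right. field. lra.
Qed.

Lemma mul_f_le_mul_f0 t x : x * f t x <= x * f t 0.
Proof.
  destruct (Rle_dec 0 x) as [Hx | Hx].
  - apply Rmult_le_compat_l; [exact Hx | now apply f_le_f0].
  - destruct Hf as [_ [_ [_ [_ [Hneg0 _]]]]]. rewrite Hneg0 by lra. lra.
Qed.

Lemma reaction_loss_le t w q L :
  (forall x y, Rabs x <= 2 -> Rabs y <= 2 -> Rabs (f t x - f t y) <= L * Rabs (x - y)) ->
  0 <= q -> (0 < w -> w <= 2 /\ L * w ^ 2 <= q) ->
  w * (f t 0 - f t w) <= q.
Proof.
  intros HL Hq Hsmall. destruct (Rle_dec w 0) as [Hneg | Hpos].
  - destruct Hf as [_ [_ [_ [_ [Hflat _]]]]]. rewrite (Hflat t w Hneg). lra.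
  - destruct (Hsmall ltac:(lra)) as [Hle2 Hsq].
    assert (Hl : Rabs (f t 0 - f t w) <= L * Rabs (0 - w))
      by (apply HL; rewrite ?Rabs_R0, ?Rabs_right; lra).
    rewrite Rminus_0_l, Rabs_Ropp, (Rabs_right w) in Hl by lra.
    pose proof (Rle_abs (f t 0 - f t w)).
    apply Rle_trans with (L * w ^ 2); [simpl; nra | exact Hsq].
Qed.

End Reaction.

Lemma mul_f_increment_le (f : R -> R -> R) t x y K L F :
  0 <= L -> Rabs x <= K -> Rabs y <= K -> y <= x ->
  (forall a b, Rabs a <= K -> Rabs b <= K -> Rabs (f t a - f t b) <= L * Rabs (a - b)) ->
  Rabs (f t 0) <= F ->
  x * f t x - y * f t y <= (F + 2 * L * K) * (x - y).
Proof.
  intros HL Hx Hy Hxy Hlip HF.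
  assert (HK : 0 <= K) by (pose proof (Rabs_pos x); lra).
  assert (H1 : Rabs (f t x - f t 0) <= L * Rabs (x - 0)) by (apply Hlip; rewrite ?Rabs_R0; lra).
  assert (H2 : Rabs (f t x - f t y) <= L * Rabs (x - y)) by (apply Hlip; assumption).
  rewrite Rminus_0_r in H1. rewrite (Rabs_right (x - y)) in H2 by lra.
  assert (Hfx : f t x <= F + L * K).
  { assert (L * Rabs x <= L * K) by (apply Rmult_le_compat_l; assumption).
    pose proof (Rle_abs (f t x - f t 0)). pose proof (Rle_abs (f t 0)). lra. }
  replace (x * f t x - y * f t y) with ((x - y) * f t x + y * (f t x - f t y)) by ring.
  assert ((x - y) * f t x <= (x - y) * (F + L * K)) by (apply Rmult_le_compat_l; lra).
  assert (y * (f t x - f t y) <= K * (L * (x - y))).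
  { eapply Rle_trans; [apply Rle_abs |]. rewrite Rabs_mult.
    apply Rmult_le_compat; auto using Rabs_pos. }
  nra.
Qed.

Lemma solution_continuous_in f t0 u0 u a b t j :
  is_solution f t0 u0 u -> t0 <= a -> a <= t <= b -> continuous_in (fun x => u x j) a b t.
Proof.
  intros [Hinit [_ [Hder Hright]]] Ha Ht.
  destruct (Rle_lt_or_eq_dec t0 t ltac:(lra)) as [Hlt | <-].
  - apply continuity_pt_continuous_in. eapply continuity_pt_derivable_pt_lim, Hder, Hlt.
  - intros eps Heps. destruct (Hright j eps Heps) as [del [Hdel Hnear]].
    exists del. split; [exact Hdel |]. intros x Hx Hxt.
    rewrite Hinit. apply Hnear. apply Rabs_def2 in Hxt. lra.
Qed.

Section Comparison.
Variables (f fu : R -> R -> R) (M0 : R).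
Hypothesis Hf : H0 f fu M0.
Variables (t0 : R) (u0 : Z -> R) (u : R -> Z -> R).
Hypothesis Hsol : is_solution f t0 u0 u.

Lemma solution_le_supersolution (W dW : R -> Z -> R) a b :
  t0 <= a <= b ->
  (forall t j, derivable_pt_lim (fun x => W x j) t (dW t j)) ->
  (forall t j, a < t <= b -> disc_lap (W t) j + f t 0 * W t j <= dW t j) ->
  (forall t j, a <= t <= b -> 0 <= W t j) ->
  (forall j, u a j <= W a j) ->
  forall t j, a <= t <= b -> u t j <= W t j.
Proof.
  intros [Ha Hab] HdW Hsuper HWpos Hinit t j Ht.
  pose proof Hsol as [_ [Hbd [Hder _]]].
  destruct (Hbd b ltac:(lra)) as [Mu HMu].
  destruct (continuous_ab_bound (fun x => f x 0) a b Hab (f0_continuous f fu M0 Hf))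
    as [F [HF0 HF]].
  enough (u t j - W t j <= 0) by lra.
  apply (lattice_max_principle (fun t j => u t j - W t j) a b F Mu HF0); [| | | | exact Ht].
  - intros i. specialize (Hinit i). lra.
  - intros s i Hs. pose proof (HMu s i ltac:(lra)). pose proof (Rle_abs (u s i)).
    pose proof (HWpos s i Hs). lra.
  - intros s i Hs. apply continuous_in_minus; [now apply (solution_continuous_in f t0 u0) |].
    eapply continuity_pt_continuous_in, continuity_pt_derivable_pt_lim, HdW.
  - intros s i Hs. exists (lattice_rhs f s (u s) i - dW s i). split.
    + apply derivable_pt_lim_minus; [apply Hder; lra | apply HdW].
    + intros Hpos. rewrite lattice_rhs_disc_lap.
      pose proof (mul_f_le_mul_f0 f fu M0 Hf s (u s i)). pose proof (Hsuper s i Hs).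
      pose proof (Rle_abs (f s 0)). pose proof (HF s ltac:(lra)).
      assert (f s 0 * (u s i - W s i) <= F * (u s i - W s i)) by (apply Rmult_le_compat_r; lra).
      unfold disc_lap in *. lra.
Qed.

Lemma subsolution_le_solution (W dW : R -> Z -> R) a b K :
  t0 <= a <= b ->
  (forall t j, derivable_pt_lim (fun x => W x j) t (dW t j)) ->
  (forall t j, a < t <= b -> dW t j <= disc_lap (W t) j + W t j * f t (W t j)) ->
  (forall t j, a <= t <= b -> W t j <= K) ->
  (forall j, W a j <= u a j) ->
  forall t j, a <= t <= b -> W t j <= u t j.
Proof.
  intros [Ha Hab] HdW Hsub HWbd Hinit t j Ht.
  pose proof Hsol as [_ [Hbd [Hder _]]].
  destruct (Hbd b ltac:(lra)) as [Mu HMu].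
  destruct (continuous_ab_bound (fun x => f x 0) a b Hab (f0_continuous f fu M0 Hf))
    as [F [HF0 HF]].
  set (K' := Mu + Rabs K + 1).
  assert (HMu0 : 0 <= Mu)
    by (pose proof (HMu a 0%Z ltac:(lra)); pose proof (Rabs_pos (u a 0%Z)); lra).
  pose proof (Rabs_pos K). pose proof (Rle_abs K).
  destruct Hf as [_ [Hlip _]].
  destruct (Hlip K') as [L [HL HLlip]]; [unfold K'; lra |].
  assert (HLam : 0 <= F + 2 * L * K') by (unfold K'; nra).
  enough (W t j - u t j <= 0) by lra.
  apply (lattice_max_principle (fun t j => W t j - u t j) a b _ (K + Mu) HLam); [| | | | exact Ht].
  - intros i. specialize (Hinit i). lra.
  - intros s i Hs. pose proof (HMu s i ltac:(lra)). pose proof (Rle_abs (- u s i)).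
    rewrite Rabs_Ropp in *. pose proof (HWbd s i Hs). lra.
  - intros s i Hs. apply continuous_in_minus; [| now apply (solution_continuous_in f t0 u0)].
    eapply continuity_pt_continuous_in, continuity_pt_derivable_pt_lim, HdW.
  - intros s i Hs. exists (dW s i - lattice_rhs f s (u s) i). split.
    + apply derivable_pt_lim_minus; [apply HdW | apply Hder; lra].
    + intros Hpos. rewrite lattice_rhs_disc_lap.
      pose proof (Hsub s i Hs). pose proof (HWbd s i ltac:(lra)).
      pose proof (HMu s i ltac:(lra)). pose proof (Rle_abs (- u s i)). rewrite Rabs_Ropp in *.
      assert (Hincr : W s i * f s (W s i) - u s i * f s (u s i)
                      <= (F + 2 * L * K') * (W s i - u s i)).
      { apply mul_f_increment_le; [exact HL | | | lra | intros; now apply HLlip | apply HF; lra].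
        - apply Rabs_le. unfold K'. lra.
        - unfold K'. lra. }
      unfold disc_lap in *. lra.
Qed.

End Comparison.

Lemma front_difference_bound d d1 del L2 a x mu mut :
  0 < d <= 2 -> 0 < del -> 0 < mu -> mu < mut < 2 * mu ->
  Rmax 2 (4 * L2 / del) <= d1 * exp a ->
  0 < d * exp (- mu * x) - d1 * exp (a - mut * x) ->
  d * exp (- mu * x) - d1 * exp (a - mut * x) <= 2 /\
  L2 * (d * exp (- mu * x) - d1 * exp (a - mut * x)) ^ 2 <= del * (d1 * exp (a - mut * x)).
Proof.
  intros Hd Hdel Hmu Hmut Hd1 Hpos.
  pose proof (Rmax_l 2 (4 * L2 / del)). pose proof (Rmax_r 2 (4 * L2 / del)).
  assert (Hsplit : d1 * exp (a - mut * x) = d1 * exp a * exp (- mut * x))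
    by (rewrite Rmult_assoc, <- exp_plus; do 2 f_equal; ring).
  rewrite Hsplit in *.
  pose proof (exp_pos (- mu * x)). pose proof (exp_pos (- mut * x)).
  (* since [mut > mu] and [d1 e^a >= 2 >= d], the difference is positive only where [x > 0] *)
  assert (Hx : 0 < x).
  { apply Rnot_le_lt. intros Hx.
    assert (exp (- mu * x) <= exp (- mut * x)) by (apply exp_le_compat; nra).
    nra. }
  assert (Hlt1 : exp (- mu * x) < 1) by (rewrite <- exp_0; apply exp_increasing; nra).
  assert (Hsq : exp (- mu * x) ^ 2 <= exp (- mut * x)).
  { replace (exp (- mu * x) ^ 2) with (exp (- mu * x + - mu * x)) by (rewrite exp_plus; ring).
    apply exp_le_compat. nra. }
  set (w := d * exp (- mu * x) - d1 * exp a * exp (- mut * x)) in *.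
  assert (Hw : w <= d * exp (- mu * x)) by (unfold w; nra).
  split; [nra |].
  assert (Hw2 : w ^ 2 <= 4 * exp (- mut * x)).
  { apply Rle_trans with ((d * exp (- mu * x)) ^ 2); [apply pow_incr; lra |].
    rewrite Rpow_mult_distr. apply Rle_trans with (4 * exp (- mu * x) ^ 2); [| lra].
    apply Rmult_le_compat_r; [apply pow_le; lra | nra]. }
  assert (H4 : 4 * L2 <= del * (d1 * exp a)).
  { apply Rmult_le_reg_r with (/ del); [now apply Rinv_0_lt_compat |].
    replace (del * (d1 * exp a) * / del) with (d1 * exp a) by (field; lra).
    unfold Rdiv in *. lra. }
  assert (0 <= w ^ 2) by apply pow2_ge_0.
  rewrite <- Rmult_assoc. destruct (Rle_dec 0 L2).
  - apply Rle_trans with (L2 * (4 * exp (- mut * x))); [now apply Rmult_le_compat_l |].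
    rewrite <- Rmult_assoc. apply Rmult_le_compat_r; lra.
  - assert (L2 * w ^ 2 <= 0) by nra.
    assert (0 <= del * (d1 * exp a) * exp (- mut * x))
      by (apply Rmult_le_pos; [apply Rmult_le_pos |]; lra).
    lra.
Qed.

Lemma interval_step_induction (P : R -> Prop) a b h :
  0 < h -> P a ->
  (forall s t, a <= s <= t -> t <= b -> t <= s + h -> P s -> P t) ->
  forall t, a <= t <= b -> P t.
Proof.
  intros Hh Ha Hstep.
  assert (Hn : forall n : nat, forall t, a <= t <= b -> t <= a + INR n * h -> P t).
  { induction n as [| n IH]; intros t Ht Htn.
    - simpl in Htn. replace t with a by lra. exact Ha.
    - rewrite S_INR in Htn. pose proof (pos_INR n).
      destruct (Rle_dec t (a + INR n * h)) as [Hle | Hgt]; [now apply IH |].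
      apply (Hstep (a + INR n * h)); try lra; [nra |].
      apply IH; [split; nra | lra]. }
  intros t Ht. destruct (archimed ((t - a) / h)) as [Hup _].
  apply (Hn (Z.to_nat (up ((t - a) / h)))); [exact Ht |].
  assert (Hq : 0 <= (t - a) / h) by (apply Rdiv_le_0_compat; lra).
  rewrite INR_IZR_INZ, Z2Nat.id by (apply le_IZR; lra).
  assert ((t - a) / h * h = t - a) by (field; lra). nra.
Qed.

Lemma disc_lap_lincomb p q (v w : Z -> R) j :
  disc_lap (fun i => p * v i + q * w i) j = p * disc_lap v j + q * disc_lap w j.
Proof. unfold disc_lap. ring. Qed.

Lemma derivable_pt_lim_lincomb (g h : R -> R) p q x lg lh :
  derivable_pt_lim g x lg -> derivable_pt_lim h x lh ->
  derivable_pt_lim (fun y => p * g y + q * h y) x (p * lg + q * lh).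
Proof.
  intros Hg Hh.
  apply (derivable_pt_lim_plus (fun y => p * g y) (fun y => q * h y));
    now apply derivable_pt_lim_scal.
Qed.

Section Fronts.
Variables (f fu : R -> R -> R) (M0 mu mut : R).
Hypothesis Hf : H0 f fu M0.
Hypothesis Hmu : 0 < mu.

Definition wave (m : R) (a : R -> R) (t : R) (j : Z) : R :=
  exp (a t - m * (IZR j - Rint (cfun f mu) 0 t)).

Lemma phi_wave t j : phi f mu t j = wave mu (fun _ => 0) t j.
Proof. unfold phi, wave. f_equal. ring. Qed.

Lemma wave_pos m a t j : 0 < wave m a t j.
Proof. apply exp_pos. Qed.

Lemma wave_le m (a b : R -> R) t j : a t <= b t -> wave m a t j <= wave m b t j.
Proof. intros Hab. apply exp_le_compat. lra. Qed.

Lemma disc_lap_wave m a t j : disc_lap (wave m a t) j = lap_symbol m * wave m a t j.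
Proof.
  set (C := Rint (cfun f mu) 0 t).
  assert (Hw : forall i, wave m a t i = exp ((a t + m * C) - m * IZR i))
    by (intros i; unfold wave; f_equal; unfold C; ring).
  unfold disc_lap. rewrite !Hw. exact (disc_lap_exp _ m j).
Qed.

Lemma wave_derive m a da t j : derivable_pt_lim a t da ->
  derivable_pt_lim (fun x => wave m a x j) t ((da + m * cfun f mu t) * wave m a t j).
Proof.
  intros Ha. unfold wave.
  replace ((da + m * cfun f mu t) * _)
    with (exp (a t - m * (IZR j - Rint (cfun f mu) 0 t)) * (da - m * (0 - cfun f mu t)))
    by ring.
  apply (derivable_pt_lim_comp (fun x => a x - m * (IZR j - Rint (cfun f mu) 0 x)) exp);
    [| apply derivable_pt_lim_exp].
  apply (derivable_pt_lim_minus a (fun x => m * (IZR j - Rint (cfun f mu) 0 x))); [exact Ha |].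
  apply (derivable_pt_lim_scal (fun x => IZR j - Rint (cfun f mu) 0 x)).
  apply (derivable_pt_lim_minus (fun _ => IZR j) (fun x => Rint (cfun f mu) 0 x));
    [apply derivable_pt_lim_const |].
  apply derivable_pt_lim_Rint. intros x. apply (cfun_continuous f fu M0 Hf).
Qed.

Lemma phi_derive t j :
  derivable_pt_lim (fun x => phi f mu x j) t (disc_lap (phi f mu t) j + f t 0 * phi f mu t j).
Proof.
  apply (derivable_pt_lim_ext (fun x => wave mu (fun _ => 0) x j)).
  { intros x. symmetry. apply phi_wave. }
  assert (Hlap : disc_lap (phi f mu t) j = disc_lap (wave mu (fun _ => 0) t) j)
    by (unfold disc_lap; now rewrite !phi_wave).
  rewrite Hlap, disc_lap_wave, phi_wave.
  replace (lap_symbol mu * _ + _)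
    with ((0 + mu * cfun f mu t) * wave mu (fun _ => 0) t j)
    by (unfold cfun, speed, lap_symbol; field; lra).
  apply wave_derive, derivable_pt_lim_const.
Qed.

Lemma phi_minus_wave_bound d d1 del L2 Ca (a : R -> R) t j :
  0 < d <= 2 -> 0 < del -> mu < mut < 2 * mu ->
  Rmax 2 (4 * L2 / del) * exp Ca <= d1 -> - Ca <= a t ->
  0 < d * phi f mu t j - d1 * wave mut a t j ->
  d * phi f mu t j - d1 * wave mut a t j <= 2 /\
  L2 * (d * phi f mu t j - d1 * wave mut a t j) ^ 2 <= del * (d1 * wave mut a t j).
Proof.
  intros Hd Hdel Hmut Hd1 Ha. unfold phi, wave.
  apply front_difference_bound; try assumption.
  pose proof (Rmax_l 2 (4 * L2 / del)). pose proof (exp_pos (a t)).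
  assert (1 <= exp Ca * exp (a t))
    by (rewrite <- exp_plus, <- exp_0; apply exp_le_compat; lra).
  apply Rle_trans with (Rmax 2 (4 * L2 / del) * exp Ca * exp (a t)); [nra |].
  apply Rmult_le_compat_r; lra.
Qed.

(* [A] is merely Lipschitz; this smooth replacement agrees with [A] at [s], stays below it
   afterwards by [A_admissible], and has slope [del - B]. *)
Definition A_minorant (del : R) (A : R -> R) (s x : R) : R :=
  A s - Rint (Bfun f mu mut) s x + del * (x - s).

Lemma A_minorant_start del A s : A_minorant del A s s = A s.
Proof.
  unfold A_minorant. rewrite Rint_point by apply (Bfun_continuous f fu M0 Hf). ring.
Qed.

Lemma A_minorant_le del A s x :
  (forall s t, s <= t -> del * (t - s) <= A t - A s + Rint (Bfun f mu mut) s t) ->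
  s <= x -> A_minorant del A s x <= A x.
Proof. intros Hadm Hsx. specialize (Hadm s x Hsx). unfold A_minorant. lra. Qed.

Lemma minorant_wave_derive del A s t j :
  derivable_pt_lim (fun x => wave mut (A_minorant del A s) x j) t
    (disc_lap (wave mut (A_minorant del A s) t) j
     + (f t 0 + del) * wave mut (A_minorant del A s) t j).
Proof.
  rewrite disc_lap_wave.
  replace (lap_symbol mut * _ + _)
    with ((- Bfun f mu mut t + del + mut * cfun f mu t) * wave mut (A_minorant del A s) t j)
    by (unfold Bfun, lap_symbol; ring).
  apply wave_derive. unfold A_minorant.
  replace (- Bfun f mu mut t + del) with (0 - Bfun f mu mut t + del * (1 - 0)) by ring.
  apply (derivable_pt_lim_plus (fun x => A s - Rint (Bfun f mu mut) s x) (fun x => del * (x - s))).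
  - apply (derivable_pt_lim_minus (fun _ => A s) (fun x => Rint (Bfun f mu mut) s x));
      [apply derivable_pt_lim_const |].
    apply derivable_pt_lim_Rint. intros x. apply (Bfun_continuous f fu M0 Hf).
  - apply (derivable_pt_lim_scal (fun x => x - s)).
    apply (derivable_pt_lim_minus (fun x => x) (fun _ => s));
      [apply derivable_pt_lim_id | apply derivable_pt_lim_const].
Qed.

End Fronts.

Section Bounds.
Variables (f fu : R -> R -> R) (M0 mu mut del : R) (A : R -> R).
Hypothesis Hf : H0 f fu M0.
Hypothesis Hmu : 0 < mu.
Hypothesis Hdel : 0 < del.
Hypothesis Hadm : forall s t, s <= t -> del * (t - s) <= A t - A s + Rint (Bfun f mu mut) s t.
Variables (t0 : R) (u0 : Z -> R) (u : R -> Z -> R).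
Hypothesis Hsol : is_solution f t0 u0 u.

Lemma front_upper_bound d d1 :
  0 <= d -> 0 <= d1 ->
  (forall j, u0 j <= d * phi f mu t0 j + d1 * phi1 f mu mut A t0 j) ->
  forall t, t0 <= t -> forall j, u t j <= d * phi f mu t j + d1 * phi1 f mu mut A t j.
Proof.
  intros Hd Hd1 Hini t Ht j.
  set (Q := wave f mu mut (A_minorant f mu mut del A t0)).
  assert (HQ : Q t j <= phi1 f mu mut A t j)
    by (apply wave_le, (A_minorant_le f mu mut); assumption).
  assert (u t j <= d * phi f mu t j + d1 * Q t j); [| nra].
  apply (solution_le_supersolution f fu M0 Hf t0 u0 u Hsol
    (fun x i => d * phi f mu x i + d1 * Q x i)
    (fun x i => d * (disc_lap (phi f mu x) i + f x 0 * phi f mu x i)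
              + d1 * (disc_lap (Q x) i + (f x 0 + del) * Q x i)) t0 t); [lra | | | | | lra].
  - intros x i. apply derivable_pt_lim_lincomb;
      [apply (phi_derive f fu M0) | apply (minorant_wave_derive f fu M0)]; assumption.
  - intros x i _. cbv beta. rewrite disc_lap_lincomb.
    pose proof (wave_pos f mu mut (A_minorant f mu mut del A t0) x i) as HQpos. fold Q in HQpos.
    assert (0 <= d1 * del * Q x i) by (apply Rmult_le_pos; [apply Rmult_le_pos |]; lra).
    lra.
  - intros x i _. pose proof (exp_pos (- mu * (IZR i - Rint (cfun f mu) 0 x))).
    pose proof (wave_pos f mu mut (A_minorant f mu mut del A t0) x i) as HQpos. fold Q in HQpos.
    unfold phi. nra.
  - intros i. destruct Hsol as [Hinit _]. rewrite Hinit.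
    unfold Q, wave. rewrite (A_minorant_start f fu M0) by exact Hf. apply Hini.
Qed.

Lemma front_lower_step d d1 L2 Ca s t :
  0 < d <= 2 -> mu < mut < 2 * mu ->
  (forall t x y, Rabs x <= 2 -> Rabs y <= 2 -> Rabs (f t x - f t y) <= L2 * Rabs (x - y)) ->
  Rmax 2 (4 * L2 / del) * exp Ca <= d1 ->
  t0 <= s <= t ->
  (forall x, s <= x <= t -> - Ca <= A_minorant f mu mut del A s x) ->
  (forall j, d * phi f mu s j - d1 * phi1 f mu mut A s j <= u s j) ->
  forall j, d * phi f mu t j - d1 * phi1 f mu mut A t j <= u t j.
Proof.
  intros Hd Hmut HL2 Hd1 Hst Hmin Hini j.
  set (Q := wave f mu mut (A_minorant f mu mut del A s)).
  set (W := fun x i => d * phi f mu x i + - d1 * Q x i).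
  assert (Hd1pos : 0 <= d1).
  { pose proof (Rmax_l 2 (4 * L2 / del)). pose proof (exp_pos Ca). nra. }
  assert (Hfront : forall x i, s <= x <= t -> 0 < W x i ->
                   W x i <= 2 /\ L2 * W x i ^ 2 <= del * (d1 * Q x i)).
  { intros x i Hx. replace (W x i) with (d * phi f mu x i - d1 * Q x i) by (unfold W; ring).
    apply (phi_minus_wave_bound f mu mut Hmu d d1 del L2 Ca); auto. }
  assert (HQ : Q t j <= phi1 f mu mut A t j)
    by (apply wave_le, (A_minorant_le f mu mut); [assumption | lra]).
  assert (W t j <= u t j); [| unfold W in *; nra].
  apply (subsolution_le_solution f fu M0 Hf t0 u0 u Hsol W
    (fun x i => d * (disc_lap (phi f mu x) i + f x 0 * phi f mu x i)
              + - d1 * (disc_lap (Q x) i + (f x 0 + del) * Q x i)) s t 2); [lra | | | | | lra].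
  - intros x i. apply derivable_pt_lim_lincomb;
      [apply (phi_derive f fu M0) | apply (minorant_wave_derive f fu M0)]; assumption.
  - intros x i Hx. unfold W at 1. rewrite disc_lap_lincomb. fold (W x).
    pose proof (wave_pos f mu mut (A_minorant f mu mut del A s) x i) as HQpos. fold Q in HQpos.
    assert (Hloss : W x i * (f x 0 - f x (W x i)) <= del * (d1 * Q x i)).
    { apply (reaction_loss_le f fu M0 Hf x _ _ L2); [auto | | now apply Hfront; lra].
      apply Rmult_le_pos; [| apply Rmult_le_pos]; lra. }
    assert (f x 0 * W x i = d * (f x 0 * phi f mu x i) + - d1 * (f x 0 * Q x i))
      by (unfold W; ring).
    lra.
  - intros x i Hx. destruct (Rle_dec (W x i) 0); [lra |].
    apply (Hfront x i Hx). lra.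
  - intros i. unfold W, Q, wave. rewrite (A_minorant_start f fu M0) by exact Hf.
    specialize (Hini i). unfold phi1 in Hini. lra.
Qed.

Lemma front_lower_bound d d1 MA L2 :
  0 < d <= 2 -> mu < mut < 2 * mu ->
  (forall t, Rabs (A t) <= MA) ->
  (forall t x y, Rabs x <= 2 -> Rabs y <= 2 -> Rabs (f t x - f t y) <= L2 * Rabs (x - y)) ->
  Rmax 2 (4 * L2 / del) * exp (MA + 1) <= d1 ->
  (forall j, d * phi f mu t0 j - d1 * phi1 f mu mut A t0 j <= u0 j) ->
  forall t, t0 <= t -> forall j, d * phi f mu t j - d1 * phi1 f mu mut A t j <= u t j.
Proof.
  intros Hd Hmut HMA HL2 Hd1 Hini t1 Ht1.
  destruct (continuous_ab_bound (Bfun f mu mut) t0 t1 Ht1 (Bfun_continuous f fu M0 Hf mu mut))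
    as [Bm [HBm0 HBm]].
  (* on windows of length 1 / (Bm + 1) the integral of B, hence the drift of the minorant of A,
     stays below 1 *)
  apply (interval_step_induction (fun t => forall j,
           d * phi f mu t j - d1 * phi1 f mu mut A t j <= u t j) t0 t1 (/ (Bm + 1)));
    [apply Rinv_0_lt_compat; lra | | | lra].
  - intros j. destruct Hsol as [Hinit _]. rewrite Hinit. apply Hini.
  - intros s t Hs Ht Hh Hps. apply (front_lower_step d d1 L2 (MA + 1) s t); try assumption.
    intros x Hx. unfold A_minorant.
    assert (Hint : Rint (Bfun f mu mut) s x <= Bm * (x - s)).
    { apply Rint_le_const; [apply (Bfun_continuous f fu M0 Hf) | lra |].
      intros y Hy. pose proof (HBm y ltac:(lra)). pose proof (Rle_abs (Bfun f mu mut y)). lra. }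
    assert (Hstep : Bm * (x - s) <= 1).
    { apply Rle_trans with (Bm * / (Bm + 1)); [apply Rmult_le_compat_l; lra |].
      apply Rmult_le_reg_r with (Bm + 1); [lra |].
      rewrite Rmult_assoc, Rinv_l by lra. lra. }
    pose proof (HMA s). pose proof (Rle_abs (- A s)). rewrite Rabs_Ropp in *.
    assert (0 <= del * (x - s)) by (apply Rmult_le_pos; lra).
    lra.
Qed.

End Bounds.

Theorem proposition4p1
  (f fu : R -> R -> R) (M0 : R) (Hf : H0 f fu M0)
  (fbar : R) (Hfbar : is_liminf_avg (fun t => f t 0) fbar)
  (mustar : R) (Hmustar_pos : 0 < mustar)
  (Hmustar_min : forall nu, 0 < nu -> speed fbar mustar <= speed fbar nu)
  (gamma : R) (Hgamma : speed fbar mustar < gamma)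
  (mu : R) (Hmu : 0 < mu < mustar) (Hmu_eq : speed fbar mu = gamma)
  (mut : R) (Hmut : mu < mut < 2 * mu)
  (HB : liminf_avg_pos (Bfun f mu mut))
  (A : R -> R) (HA : A_admissible A (Bfun f mu mut)) :
  exists D1, forall d1, D1 <= d1 ->
  forall d, 0 < d <= 2 ->
  forall (t0 : R) (u0 : Z -> R), linf_plus u0 ->
  forall u : R -> Z -> R, is_solution f t0 u0 u ->
    ((forall j, u0 j <= d * phi f mu t0 j + d1 * phi1 f mu mut A t0 j) ->
       forall t, t0 <= t -> forall j,
         u t j <= d * phi f mu t j + d1 * phi1 f mu mut A t j) /\
    ((forall j, d * phi f mu t0 j - d1 * phi1 f mu mut A t0 j <= u0 j) ->
       forall t, t0 <= t -> forall j,
         d * phi f mu t j - d1 * phi1 f mu mut A t j <= u t j).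
Proof.
  destruct HA as [[MA HMA] [_ [del [Hdel Hadm]]]].
  pose proof Hf as [_ [Hlip _]].
  destruct (Hlip 2) as [L2 [_ HL2]]; [lra |].
  exists (Rmax 2 (4 * L2 / del) * exp (MA + 1)).
  intros d1 Hd1 d Hd t0 u0 _ u Hsol.
  assert (Hd1pos : 0 <= d1).
  { pose proof (Rmax_l 2 (4 * L2 / del)). pose proof (exp_pos (MA + 1)). nra. }
  split.
  - apply (front_upper_bound f fu M0 mu mut del A Hf ltac:(lra) Hdel Hadm t0 u0 u Hsol d d1); lra.
  - apply (front_lower_bound f fu M0 mu mut del A Hf ltac:(lra) Hdel Hadm t0 u0 u Hsol
             d d1 MA L2); assumption.
Qed.
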